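(* Let $\gamma\to_d\gamma'$ be a d-step. Then: (i) if the step is smooth, then $NS_\gamma(k)=NS_{\gamma'}(k)$ for every integer $k$; (ii) if the step is non-smooth, then with $k^*=\min\{\mathrm{rank}_\gamma(p,q) : (p,q)\in\mathrm{Edges},\ (p,q)\text{ non-smooth in }\gamma,\ \gamma'.p.d\ne\gamma.p.d \text{ or } \gamma'.q.d\neq\gamma.q.d\}$, we have (a) $NS_\gamma(k)=NS_{\gamma'}(k)$ for every integer $k<k^*$, and (b) $NS_{\gamma'}(k^* )\subsetneq NS_\gamma(k^* )$.
   Context: Let $G$ be a finite, connected, undirected graph with node set $V$ and a distinguished node $r$ (the root); $\mathrm{Edges}=\{(p,q)\in V\times V : p,q\text{ adjacent}\}$ (both orientations). Each node $p$ has a fixed ordered list $N(p)$ of its neighbours. A configuration $\gamma$ assigns to each node $p$ a value $\gamma.p.d\in\mathbb N$ and a neighbour $\gamma.p.par\in N(p)$. For a non-root $p$ let $Dist_p(\gamma)=\min\{\gamma.q.d+1 : q\in N(p)\}$. Algorithm BFS: Root enabled iff $\gamma.r.d\neq 0$, executing sets $r.d:=0$. Non-root $p$, action CD: enabled iff $\gamma.p.d\ne Dist_p(\gamma)$, executing sets $p.d:=Dist_p(\gamma)$. Non-root $p$, action CP: enabled iff $\gamma.p.d=Dist_p(\gamma)$ and $\gamma.q_0.d+1\neq\gamma.p.d$ with $q_0=\gamma.p.par$; executing sets $p.par$ to the first $q\in N(p)$ with $\gamma.q.d+1=\gamma.p.d$. A step $\gamma\to\gamma'$ holds iff a nonempty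 set $S$ of enabled nodes simultaneously execute their enabled action (evaluated in $\gamma$), others unchanged. A d-step $\gamma\to_d\gamma'$ is a step with $\gamma.r.d=\gamma'.r.d$ and $\gamma.p.d\neq\gamma'.p.d$ for some $p$. An edge $(p,q)$ is smooth in $\gamma$ if $|\gamma.p.d-\gamma.q.d|\le 1$, non-smooth otherwise. A d-step $\gamma\to_d\gamma'$ is smooth if every node $p$ with $\gamma'.p.d\neq\gamma.p.d$ has all its edges $(p,q)$, $q\in N(p)$, smooth in $\gamma$; otherwise it is non-smooth. $\mathrm{rank}_\gamma(p,q)=\min(\gamma.p.d,\gamma.q.d)$. $NS_\gamma(k)=\{e\in\mathrm{Edges} : e \text{ non-smooth in }\gamma,\ \mathrm{rank}_\gamma(e)=k\}$. *)

From mathcomp Require Import all_boot.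
Set Implicit Arguments. Unset Strict Implicit. Unset Printing Implicit Defensive.

Definition simple_graph (V : finType) (N : V -> seq V) : Prop :=
  (forall p, uniq (N p)) /\
  (forall p, p \notin N p) /\
  (forall p q, (q \in N p) = (p \in N q)).

Definition connected_graph (V : finType) (N : V -> seq V) : Prop :=
  forall p q, connect (fun x y => y \in N x) p q.

Record config (V : finType) := Config { cd : V -> nat; cpar : V -> V }.

Section BFS.
Variables (V : finType) (N : V -> seq V) (r : V).

Definition valid_config (g : config V) : Prop := forall p, cpar g p \in N p.

(* Dist_p(g) = min { g.q.d + 1 : q in N(p) }  (N p is nonempty for non-root
   nodes of a connected graph with >= 2 nodes). *)
Definition Dist (g : config V) (p : V) : nat :=
  foldr (fun q m => minn (cd g q).+1 m) (cd g (head p (N p))).+1 (N p).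

Definition enabled (g : config V) (p : V) : bool :=
  if p == r then cd g r != 0
  else (cd g p != Dist g p) ||
       ((cd g p == Dist g p) && ((cd g (cpar g p)).+1 != cd g p)).

Definition first_par (g : config V) (p : V) : V :=
  nth p (N p) (find (fun q => (cd g q).+1 == cd g p) (N p)).

Definition exec_d (g : config V) (p : V) : nat :=
  if p == r then 0 else if cd g p != Dist g p then Dist g p else cd g p.

Definition exec_par (g : config V) (p : V) : V :=
  if p == r then cpar g p else if cd g p != Dist g p then cpar g p
  else first_par g p.

Definition step (g g' : config V) : Prop :=
  exists S : {set V}, S != set0 /\
    (forall p, p \in S -> enabled g p) /\
    (forall p, if p \in S then cd g' p = exec_d g p /\ cpar g' p = exec_par g p
               else cd g' p = cd g p /\ cpar g' p = cpar g p).

Definition d_step (g g' : config V) : Prop :=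
  step g g' /\ cd g r = cd g' r /\ exists p, cd g p != cd g' p.

Definition is_edge (e : V * V) : bool := e.2 \in N e.1.

Definition smooth_edge (g : config V) (e : V * V) : bool :=
  (cd g e.1 <= (cd g e.2).+1) && (cd g e.2 <= (cd g e.1).+1).

Definition smooth_step (g g' : config V) : Prop :=
  forall p, cd g' p != cd g p -> forall q, q \in N p -> smooth_edge g (p, q).

Definition rank (g : config V) (e : V * V) : nat := minn (cd g e.1) (cd g e.2).

Definition NS (g : config V) (k : nat) : {set V * V} :=
  [set e | is_edge e && ~~ smooth_edge g e && (rank g e == k)].

Definition changed_nonsmooth (g g' : config V) : {set V * V} :=
  [set e | is_edge e && ~~ smooth_edge g e &&
           ((cd g' e.1 != cd g e.1) || (cd g' e.2 != cd g e.2))].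

End BFS.

(* A node whose d-value changes in a d-step takes the value Dist, computed
   in the old configuration.  Hence if a touched edge (p, q) is non-smooth
   afterwards, with p at the lower end, then either p dropped along an edge
   that was already non-smooth below its new value, or p rose although some
   edge at p was non-smooth below its old value; both produce an edge of
   [changed_nonsmooth] of rank strictly less than the new rank of (p, q).
   Edges with unchanged endpoints keep their status and rank.  So no rank
   below the minimal rank k* of [changed_nonsmooth] is affected, and at k*
   the touched edges leave NS without new ones entering. *)

From mathcomp Require Import all_boot.
From mathcomp Require Import zify.

Set Implicit Arguments.
Unset Strict Implicit.
Unset Printing Implicit Defensive.

Lemma foldr_minS_spec {T : eqType} (f : T -> nat) (i : nat) (s : seq T) :
  let m := foldr (fun q m => minn (f q).+1 m) i s in
  (forall q, q \in s -> m <= (f q).+1) /\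
  (m = i \/ exists2 q, q \in s & m = (f q).+1).
Proof.
elim: s => [|a s [IHle IHeq]] /=; first by split=> [q|]; [rewrite in_nil | left].
split=> [q|].
  by rewrite inE => /predU1P [->|/IHle]; lia.
case: (leqP (f a).+1 (foldr (fun q m => minn (f q).+1 m) i s)) => lt_fa.
  by right; exists a; [rewrite mem_head | lia].
case: IHeq => [Em|[q sq Em]]; [left | right; exists q]; rewrite ?inE ?sq ?orbT //; lia.
Qed.

Section Dist.
Variables (V : finType) (N : V -> seq V) (g : config V).

Lemma Dist_le p q : q \in N p -> Dist N g p <= (cd g q).+1.
Proof.
by have [le_m _] := foldr_minS_spec (cd g) (cd g (head p (N p))).+1 (N p); apply: le_m.
Qed.

Lemma Dist_attained p : N p != [::] -> exists2 q, q \in N p & Dist N g p = (cd g q).+1.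
Proof.
move=> Np0; have [_ [Em|//]] := foldr_minS_spec (cd g) (cd g (head p (N p))).+1 (N p).
by exists (head p (N p)); rewrite // -nth0 mem_nth // lt0n size_eq0.
Qed.

End Dist.

Lemma smooth_edge_sym (V : finType) (g : config V) (p q : V) :
  smooth_edge g (q, p) = smooth_edge g (p, q).
Proof. by rewrite /smooth_edge andbC. Qed.

Lemma rank_sym (V : finType) (g : config V) (p q : V) : rank g (q, p) = rank g (p, q).
Proof. by rewrite /rank minnC. Qed.

Lemma connected_neighbours_nonnil (V : finType) (N : V -> seq V) (p q : V) :
  connected_graph N -> p != q -> N p != [::].
Proof.
move=> conn neq_pq; have /connectP [[|y s] /= Hs Eq] := conn p q.
  by rewrite Eq eqxx in neq_pq.
by case/andP: Hs; case: (N p).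
Qed.

Lemma d_step_moved (V : finType) (N : V -> seq V) (r : V) (g g' : config V) (p : V) :
  d_step N r g g' -> cd g' p != cd g p -> p != r /\ cd g' p = Dist N g p.
Proof.
move=> [[S [_ [_ HS]]] [Er _]] moved_p.
have neq_pr : p != r by apply: contraNneq moved_p => ->; rewrite Er.
split=> //; move: moved_p; have := HS p.
case: (p \in S) => [[-> _]|[-> _]]; last by rewrite eqxx.
rewrite /exec_d (negPf neq_pr).
by case: (eqVneq (cd g p) (Dist N g p)) => [->|]; rewrite ?eqxx.
Qed.

Section DStep.
Variables (V : finType) (N : V -> seq V) (g g' : config V).
Hypothesis N_sym : forall p q, (q \in N p) = (p \in N q).
(* The only information about the step that the argument uses. *)
Hypothesis moved_Dist : forall p, cd g' p != cd g p -> N p != [::] /\ cd g' p = Dist N g p.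

Local Notation moved p := (cd g' p != cd g p).
Local Notation touched e := (moved e.1 || moved e.2).
Local Notation CNS := (changed_nonsmooth N g g').

Lemma moved_le p q : moved p -> q \in N p -> cd g' p <= (cd g q).+1.
Proof. by move=> /moved_Dist [_ ->]; apply: Dist_le. Qed.

Lemma mem_changed_nonsmooth p q :
  q \in N p -> touched (p, q) -> ~~ smooth_edge g (p, q) -> (p, q) \in CNS.
Proof. by move=> Nq tch ns; rewrite inE /is_edge Nq ns. Qed.

Lemma moved_cases p : moved p ->
  (exists2 e, e \in CNS & rank g e < cd g' p) \/
  (cd g p < cd g' p /\ forall q, q \in N p -> smooth_edge g (p, q)).
Proof.
move=> mp; have [Np0 Ep] := moved_Dist mp.
case: (ltnP (cd g' p) (cd g p)) => [dropped|not_dropped].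
  have [q Nq Eq] := Dist_attained g Np0; rewrite -Ep in Eq.
  left; exists (p, q); last by rewrite /rank /=; lia.
  by apply: mem_changed_nonsmooth; rewrite //= ?mp // /smooth_edge /=; lia.
have risen : cd g p < cd g' p by move: mp not_dropped; lia.
case: (boolP (all (fun q => smooth_edge g (p, q)) (N p))) => [/allP|/allPn [q Nq ns]].
  by right.
left; exists (p, q); first by apply: mem_changed_nonsmooth; rewrite //= mp.
by move: ns; rewrite /smooth_edge /rank /=; lia.
Qed.

Lemma nonsmooth_touched_rank p q :
  q \in N p -> touched (p, q) -> ~~ smooth_edge g' (p, q) ->
  exists2 e, e \in CNS & rank g e < rank g' (p, q).
Proof.
wlog le_pq : p q / cd g' p <= cd g' q => [W Nq tch ns|Nq tch ns].
  case: (leqP (cd g' p) (cd g' q)) => [|lt_qp]; first by move/W; apply.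
  rewrite -rank_sym; apply: W; rewrite 1?orbC -1?N_sym -1?smooth_edge_sym //; lia.
have {ns} far : (cd g' p).+1 < cd g' q by move: ns; rewrite /smooth_edge /=; lia.
have -> : rank g' (p, q) = cd g' p by rewrite /rank /=; lia.
have q_bound : moved q -> cd g' q <= (cd g p).+1.
  by move=> mq; apply: moved_le mq _; rewrite -N_sym.
have [mp|/negPn/eqP Ep] := boolP (moved p); last first.
  by exfalso; move: tch; rewrite /= Ep eqxx /= => /q_bound; lia.
case: (moved_cases mp) => [//|[risen smooth_p]]; exfalso.
have := smooth_p q Nq; rewrite /smooth_edge /= => /andP [_ le_qp].
by have [/q_bound|/negPn/eqP] := boolP (moved q); lia.
Qed.

Lemma NS_untouched e k : ~~ touched e -> (e \in NS N g k) = (e \in NS N g' k).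
Proof.
case: e => a b; rewrite negb_or !negbK => /andP [/eqP Ea /eqP Eb].
by rewrite !inE /smooth_edge /rank /= Ea Eb.
Qed.

Section BelowChanged.
Variable k : nat.
Hypothesis k_le_CNS : forall e, e \in CNS -> k <= rank g e.

Lemma touched_notin_NS_after e : touched e -> e \notin NS N g' k.
Proof.
case: e => p q tch; rewrite inE; apply/negP => /andP [/andP [Nq ns] /eqP Er].
have [e CNSe] := nonsmooth_touched_rank Nq tch ns.
by rewrite Er; have := k_le_CNS CNSe; lia.
Qed.

Lemma NS_after_subset : NS N g' k \subset NS N g k.
Proof.
apply/subsetP=> e; have [tch|untch] := boolP (touched e).
  by rewrite (negPf (touched_notin_NS_after tch)).
by rewrite NS_untouched.
Qed.

End BelowChanged.

Lemma NS_below_changed k : (forall e, e \in CNS -> k < rank g e) -> NS N g k = NS N g' k.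
Proof.
move=> k_lt_CNS; have k_le_CNS e (CNSe : e \in CNS) := ltnW (k_lt_CNS e CNSe).
apply/eqP; rewrite eqEsubset NS_after_subset // andbT.
apply/subsetP=> e; have [tch|untch] := boolP (touched e); last by rewrite NS_untouched.
rewrite inE => /andP [/andP [Ne ns] /eqP Er].
by have := k_lt_CNS e; rewrite inE Ne ns tch Er ltnn => /(_ isT).
Qed.

Lemma smooth_step_CNS0 e : smooth_step N g g' -> e \notin CNS.
Proof.
move=> sm; case: e => p q; rewrite inE /is_edge /=.
apply/negP => /andP [/andP [Nq ns] /orP [mp|mq]]; move: ns; first by rewrite sm.
by rewrite -smooth_edge_sym sm // -N_sym.
Qed.

End DStep.

Theorem lemma7 (V : finType) (N : V -> seq V) (r : V)
    (HG : simple_graph N) (Hconn : connected_graph N)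
    (g g' : config V) (Hval : valid_config N g)
    (Hstep : d_step N r g g') :
  (smooth_step N g g' -> forall k : nat, NS N g k = NS N g' k) /\
  (~ smooth_step N g g' ->
     forall kstar : nat,
       (exists2 e, e \in changed_nonsmooth N g g' & rank g e = kstar) ->
       (forall e, e \in changed_nonsmooth N g g' -> kstar <= rank g e) ->
       (forall k : nat, k < kstar -> NS N g k = NS N g' k) /\
       NS N g' kstar \proper NS N g kstar).
Proof.
have [_ [_ N_sym]] := HG.
have moved_Dist p : cd g' p != cd g p -> N p != [::] /\ cd g' p = Dist N g p.
  by move=> mp; have [neq_pr ->] := d_step_moved Hstep mp; split=> //;
     apply: connected_neighbours_nonnil neq_pr.
split=> [sm k | _ kstar [e0 CNSe0 Er0] kstar_min].
  apply: (NS_below_changed N_sym moved_Dist) => e.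
  by rewrite (negPf (smooth_step_CNS0 N_sym e sm)).
split=> [k lt_k|].
  by apply: (NS_below_changed N_sym moved_Dist) => e /kstar_min; apply: leq_trans.
apply/properP; split; first exact: (NS_after_subset N_sym moved_Dist kstar_min).
move: (CNSe0); rewrite inE => /andP [/andP [Ne0 ns0] tch0].
exists e0; first by rewrite inE Ne0 ns0 Er0 eqxx.
exact: (touched_notin_NS_after N_sym moved_Dist kstar_min tch0).
Qed.
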